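(* Let $A$ be a skew brace. The irreducible components of $\mathrm{Spec}\,A$ (with the spectral topology) are the closed sets $H(P)=\{Q\in\mathrm{Spec}\,A\mid P\subseteq Q\}$, where $P$ is a minimal prime ideal of $A$.
   Context: A (left) skew brace is a triple $(A,+,\circ)$ where $(A,+)$ and $(A,\circ)$ are groups such that $a\circ(b+c)=a\circ b-a+a\circ c$ for all $a,b,c$; common identity $e$. Put $\lambda_a(b)=-a+a\circ b$ and $a*b=-a+a\circ b-b$. An ideal is a normal subgroup $I$ of both $(A,+)$ and $(A,\circ)$ with $\lambda_a(I)\subseteq I$ for all $a$. A prime ideal is a proper ideal $P$ such that for any subsets $X,Y$ of $A$, $\{x*y\mid x\in X,y\in Y\}\subseteq P$ implies $X\subseteq P$ or $Y\subseteq P$; $\mathrm{Spec}\,A$ is the set of prime ideals, with the spectral topology whose closed sets are $H(I)=\{P\in\mathrm{Spec}\,A\mid I\subseteq P\}$, $I$ an ideal. A minimal prime ideal is a prime ideal containing no strictly smaller prime ideal. A closed set is irreducible if it is not the union of two strictly smaller closed subsets; an irreducible component is a maximal irreducible subset. *)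

Set Implicit Arguments.

Record SkewBrace := {
  sb_car :> Type;
  sb_add : sb_car -> sb_car -> sb_car;
  sb_opp : sb_car -> sb_car;
  sb_circ : sb_car -> sb_car -> sb_car;
  sb_cinv : sb_car -> sb_car;
  sb_e : sb_car;
  sb_addA : forall a b c, sb_add a (sb_add b c) = sb_add (sb_add a b) c;
  sb_add0l : forall a, sb_add sb_e a = a;
  sb_add0r : forall a, sb_add a sb_e = a;
  sb_addNl : forall a, sb_add (sb_opp a) a = sb_e;
  sb_addNr : forall a, sb_add a (sb_opp a) = sb_e;
  sb_circA : forall a b c, sb_circ a (sb_circ b c) = sb_circ (sb_circ a b) c;
  sb_circ1l : forall a, sb_circ sb_e a = a;
  sb_circ1r : forall a, sb_circ a sb_e = a;
  sb_circVl : forall a, sb_circ (sb_cinv a) a = sb_e;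
  sb_circVr : forall a, sb_circ a (sb_cinv a) = sb_e;
  sb_brace : forall a b c,
    sb_circ a (sb_add b c) = sb_add (sb_add (sb_circ a b) (sb_opp a)) (sb_circ a c)
}.

Arguments sb_add {s}. Arguments sb_opp {s}. Arguments sb_circ {s}. Arguments sb_cinv {s}.

Section SB.
Variable A : SkewBrace.

Definition sb_lambda (a b : A) : A := sb_add (sb_opp a) (sb_circ a b).
Definition sb_star (a b : A) : A :=
  sb_add (sb_add (sb_opp a) (sb_circ a b)) (sb_opp b).

Definition subset (X Y : A -> Prop) : Prop := forall x, X x -> Y x.

Definition is_ideal (I : A -> Prop) : Prop :=
  I (sb_e A) /\
  (forall x y, I x -> I y -> I (sb_add x y)) /\
  (forall x, I x -> I (sb_opp x)) /\
  (forall a x, I x -> I (sb_add (sb_add a x) (sb_opp a))) /\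
  (forall x y, I x -> I y -> I (sb_circ x y)) /\
  (forall x, I x -> I (sb_cinv x)) /\
  (forall a x, I x -> I (sb_circ (sb_circ a x) (sb_cinv a))) /\
  (forall a x, I x -> I (sb_lambda a x)).

Definition is_prime_ideal (P : A -> Prop) : Prop :=
  is_ideal P /\ (exists a, ~ P a) /\
  forall X Y : A -> Prop,
    (forall x y, X x -> Y y -> P (sb_star x y)) -> subset X P \/ subset Y P.

Definition is_minimal_prime (P : A -> Prop) : Prop :=
  is_prime_ideal P /\
  forall Q, is_prime_ideal Q -> subset Q P -> subset P Q.

(* Subsets of Spec A are predicates on prime ideals (predicates on A). *)
Definition H (I : A -> Prop) : (A -> Prop) -> Prop :=
  fun P => is_prime_ideal P /\ subset I P.

Definition spec_subset (C D : (A -> Prop) -> Prop) : Prop :=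
  forall P, C P -> D P.

Definition spec_closed (C : (A -> Prop) -> Prop) : Prop :=
  exists I, is_ideal I /\ forall P, C P <-> H I P.

Definition strictly_smaller (C1 C : (A -> Prop) -> Prop) : Prop :=
  spec_subset C1 C /\ ~ spec_subset C C1.

Definition spec_irreducible (C : (A -> Prop) -> Prop) : Prop :=
  spec_closed C /\ (exists P, C P) /\
  ~ (exists C1 C2, spec_closed C1 /\ spec_closed C2 /\
        strictly_smaller C1 C /\ strictly_smaller C2 C /\
        forall P, C P <-> (C1 P \/ C2 P)).

Definition irreducible_component (C : (A -> Prop) -> Prop) : Prop :=
  spec_irreducible C /\
  forall D, spec_irreducible D -> spec_subset C D -> spec_subset D C.

End SB.

(* Every closed subset of Spec A is determined by the intersection of its points, and
   an irreducible closed set D has a prime intersection: if X * Y lay in the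
   intersection with neither X nor Y inside it, then D would be the union of its two
   proper closed subsets {Q in D | X ⊆ Q} and {Q in D | Y ⊆ Q}.  Conversely H(P) is
   irreducible for every prime P, because P is a generic point of H(P).  Hence the
   irreducible closed sets are exactly the H(P) with P prime, and since H reverses
   inclusion, the maximal ones are the H(P) with P minimal prime. *)

From Stdlib Require Import Classical.

Set Implicit Arguments.

Section SpectralTopology.

Variable A : SkewBrace.

Definition inter (D : (A -> Prop) -> Prop) : A -> Prop :=
  fun x => forall Q, D Q -> Q x.

Definition gen (S : A -> Prop) : A -> Prop :=
  inter (fun K => is_ideal A K /\ subset A S K).

Definition restrict (D : (A -> Prop) -> Prop) (Z : A -> Prop) : (A -> Prop) -> Prop :=
  fun Q => D Q /\ subset A Z Q.

Lemma inter_lower {D : (A -> Prop) -> Prop} {Q : A -> Prop} :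
  D Q -> subset A (inter D) Q.
Proof. intros hQ x hx. exact (hx Q hQ). Qed.

Lemma is_ideal_inter (D : (A -> Prop) -> Prop) :
  (forall Q, D Q -> is_ideal A Q) -> is_ideal A (inter D).
Proof.
  intros hD. unfold inter.
  repeat split; intros;
    match goal with hQ : D ?Q |- _ =>
      destruct (hD Q hQ) as (?&?&?&?&?&?&?&?) end;
    repeat match goal with
           | h : forall Q', D Q' -> Q' ?x, hQ : D ?Q |- _ => specialize (h Q hQ)
           end;
    auto.
Qed.

Lemma is_ideal_gen (S : A -> Prop) : is_ideal A (gen S).
Proof. apply is_ideal_inter. intros K [hK _]. exact hK. Qed.

Lemma subset_gen (S : A -> Prop) : subset A S (gen S).
Proof. intros x hx K [_ hSK]. exact (hSK x hx). Qed.

Lemma gen_subset (S K : A -> Prop) :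
  is_ideal A K -> subset A S K -> subset A (gen S) K.
Proof. intros hK hSK. apply inter_lower. split; assumption. Qed.

Lemma H_gen (S Q : A -> Prop) : H A (gen S) Q <-> H A S Q.
Proof.
  split.
  - intros [hQ hSQ]. split; [exact hQ |].
    intros x hx. exact (hSQ x (subset_gen x hx)).
  - intros [hQ hSQ]. split; [exact hQ |].
    exact (gen_subset (proj1 hQ) hSQ).
Qed.

Lemma H_self (P : A -> Prop) : is_prime_ideal A P -> H A P P.
Proof. intros hP. split; [exact hP | intros x hx; exact hx]. Qed.

Lemma H_antitone (I J : A -> Prop) :
  subset A I J -> spec_subset A (H A J) (H A I).
Proof.
  intros hIJ Q [hQ hJQ]. split; [exact hQ |].
  intros x hx. exact (hJQ x (hIJ x hx)).
Qed.

Lemma spec_closed_H (I : A -> Prop) : is_ideal A I -> spec_closed A (H A I).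
Proof. intros hI. exists I. split; [exact hI | tauto]. Qed.

Lemma spec_closed_ext {C D : (A -> Prop) -> Prop} :
  (forall Q, C Q <-> D Q) -> spec_closed A C -> spec_closed A D.
Proof.
  intros hCD [I [hI hC]]. exists I. split; [exact hI |].
  intros Q. rewrite <- hCD. apply hC.
Qed.

Lemma H_inter_of_closed (D : (A -> Prop) -> Prop) :
  spec_closed A D -> forall Q, D Q <-> H A (inter D) Q.
Proof.
  intros [I [_ hD]] Q. split.
  - intros hQ. split; [exact (proj1 (proj1 (hD Q) hQ)) | exact (inter_lower hQ)].
  - intros [hQ hDQ]. apply hD. split; [exact hQ |].
    intros x hx. apply hDQ. intros R hR. exact (proj2 (proj1 (hD R) hR) x hx).
Qed.

Lemma H_subset_closed (C : (A -> Prop) -> Prop) (P : A -> Prop) :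
  spec_closed A C -> C P -> spec_subset A (H A P) C.
Proof.
  intros hC hP Q hQ. apply (H_inter_of_closed hC).
  exact (H_antitone (inter_lower hP) hQ).
Qed.

Lemma spec_closed_restrict (D : (A -> Prop) -> Prop) (Z : A -> Prop) :
  spec_closed A D -> spec_closed A (restrict D Z).
Proof.
  intros [I [hI hD]]. exists (gen (fun x => I x \/ Z x)).
  split; [apply is_ideal_gen |].
  intros Q. rewrite H_gen. unfold H, restrict. split.
  - intros [hQ hZQ]. destruct (proj1 (hD Q) hQ) as [hpQ hIQ].
    split; [exact hpQ |]. intros x [hx | hx]; auto.
  - intros [hQ hIZQ]. split.
    + apply hD. split; [exact hQ |]. intros x hx. exact (hIZQ x (or_introl hx)).
    + intros x hx. exact (hIZQ x (or_intror hx)).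
Qed.

Lemma strictly_smaller_restrict (D : (A -> Prop) -> Prop) (Z : A -> Prop) :
  ~ subset A Z (inter D) -> strictly_smaller A (restrict D Z) D.
Proof.
  intros hZ. split.
  - intros Q [hQ _]. exact hQ.
  - intros hD. apply hZ. intros x hx Q hQ. exact (proj2 (hD Q hQ) x hx).
Qed.

Lemma is_prime_ideal_inter (D : (A -> Prop) -> Prop) :
  spec_irreducible A D -> is_prime_ideal A (inter D).
Proof.
  intros (hclosed & [Q0 hQ0] & hnosplit).
  assert (hprime : forall Q, D Q -> is_prime_ideal A Q)
    by (intros Q hQ; exact (proj1 (proj1 (H_inter_of_closed hclosed Q) hQ))).
  split; [| split].
  - apply is_ideal_inter. intros Q hQ. exact (proj1 (hprime Q hQ)).
  - destruct (proj1 (proj2 (hprime Q0 hQ0))) as [a ha].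
    exists a. intros hint. exact (ha (hint Q0 hQ0)).
  - intros X Y hXY.
    destruct (classic (subset A X (inter D))) as [hX | hX]; [left; exact hX |].
    destruct (classic (subset A Y (inter D))) as [hY | hY]; [right; exact hY |].
    exfalso. apply hnosplit. exists (restrict D X), (restrict D Y).
    split; [exact (spec_closed_restrict X hclosed) |].
    split; [exact (spec_closed_restrict Y hclosed) |].
    split; [exact (strictly_smaller_restrict hX) |].
    split; [exact (strictly_smaller_restrict hY) |].
    intros Q. split.
    + intros hQ. destruct (proj2 (proj2 (hprime Q hQ)) X Y) as [hXQ | hYQ].
      * intros x y hx hy. exact (hXY x y hx hy Q hQ).
      * left. split; assumption.
      * right. split; assumption.
    + intros [[hQ _] | [hQ _]]; exact hQ.
Qed.

Lemma spec_irreducible_H (P : A -> Prop) :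
  is_prime_ideal A P -> spec_irreducible A (H A P).
Proof.
  intros hP. split; [exact (spec_closed_H (proj1 hP)) |].
  split; [exists P; exact (H_self hP) |].
  intros (C1 & C2 & hC1 & hC2 & [_ hsmall1] & [_ hsmall2] & hunion).
  destruct (proj1 (hunion P) (H_self hP)) as [hP1 | hP2].
  - exact (hsmall1 (H_subset_closed hC1 hP1)).
  - exact (hsmall2 (H_subset_closed hC2 hP2)).
Qed.

Lemma spec_irreducible_ext {C D : (A -> Prop) -> Prop} :
  (forall Q, C Q <-> D Q) -> spec_irreducible A C -> spec_irreducible A D.
Proof.
  intros hCD (hclosed & [Q0 hQ0] & hnosplit).
  split; [exact (spec_closed_ext hCD hclosed) |].
  split; [exists Q0; apply hCD; exact hQ0 |].
  intros (C1 & C2 & hC1 & hC2 & [hsub1 hsmall1] & [hsub2 hsmall2] & hunion).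
  apply hnosplit. exists C1, C2. unfold strictly_smaller, spec_subset in *.
  repeat split; try assumption.
  - intros Q hQ. apply hCD. exact (hsub1 Q hQ).
  - intros h. apply hsmall1. intros Q hQ. apply h, hCD, hQ.
  - intros Q hQ. apply hCD. exact (hsub2 Q hQ).
  - intros h. apply hsmall2. intros Q hQ. apply h, hCD, hQ.
  - intros hQ. apply hunion, hCD, hQ.
  - intros hQ. apply hCD, hunion, hQ.
Qed.

End SpectralTopology.

Theorem lemma4p12 (A : SkewBrace) (C : (A -> Prop) -> Prop) :
  irreducible_component A C <->
  exists P : A -> Prop, is_minimal_prime A P /\ (forall Q, C Q <-> H A P Q).
Proof.
  split.
  - intros [hC hmax].
    assert (hCP := H_inter_of_closed (proj1 hC)).
    exists (inter A C). split; [| exact hCP].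
    split; [exact (is_prime_ideal_inter hC) |].
    intros Q hQ hQP.
    assert (hCQ : spec_subset A C (H A Q))
      by (intros R hR; exact (H_antitone hQP (proj1 (hCP R) hR))).
    assert (hQC : C Q) by exact (hmax _ (spec_irreducible_H hQ) hCQ Q (H_self hQ)).
    exact (inter_lower hQC).
  - intros [P [[hP hmin] hCP]].
    assert (hC : spec_irreducible A C)
      by exact (spec_irreducible_ext (fun Q => iff_sym (hCP Q)) (spec_irreducible_H hP)).
    split; [exact hC |].
    intros D hD hCD Q hQ.
    assert (hPD : D P) by exact (hCD P (proj2 (hCP P) (H_self hP))).
    assert (hDP : subset A P (inter A D))
      by exact (hmin _ (is_prime_ideal_inter hD) (inter_lower hPD)).
    apply hCP. exact (H_antitone hDP (proj1 (H_inter_of_closed (proj1 hD) Q) hQ)).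
Qed.
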